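(* In the three-agent investor/hedge-fund setting with restricted reports, fix the investor's report $\tilde m$ and let $\tilde\alpha=\tilde m/(2+\rho)$. Set $c=\frac{a\nu-\tilde\alpha(1-\nu)}{\nu(2-\nu)}$ and $s=\frac{\eta(1-\nu)}{\nu(2-\nu)}$. (i) Given fund 3's report $\tilde b$, the report $\tilde a$ maximizing fund 2's utility $g_2$ is uniquely $\tilde a^*=c+s\tilde b$. (ii) Symmetrically, given fund 2's report $\tilde a$, the report $\tilde b$ maximizing fund 3's utility $g_3$ is uniquely $\tilde b^*=c+s\tilde a$.
   Context: Three agents: agent 1 (investor), agents 2 and 3 (hedge funds). Parameters $m,a\in\mathbb{R}$ and $\rho\in(-1,1)$; true beliefs $M=\begin{pmatrix}0&a&a\\ m&0&0\\ m&0&0\end{pmatrix}$ (column $i$ is agent $i$'s true belief vector $\mu_i$), $\Sigma=\begin{pmatrix}1&0&0\\0&1&\rho\\0&\rho&1\end{pmatrix}$, $\Gamma=I_3$. Restricted reports: the investor reports a common value $\tilde m$ for $M'_{21}=M'_{31}$, fund 2 reports $M'_{12}=\tilde a$, fund 3 reports $M'_{13}=\tilde b$, and all other entries of $M'$ equal the true value $0$. The stable point for $M'$ is the unique $(W,P)$ with $W=W^T$, $P^T=-P$ and $M'-P=2\Sigma W\Gamma$. Agent $i$'s utility is $g_i=w_i^T(\mu_i-Pe_i)-w_i^T\Sigma w_i$, $w_i=We_i$. Define $\nu=\tfrac12\big(\tfrac1{2-\rho}+\tfrac1{2+\rho}\big)$ and $\eta=\tfrac12\big(\tfrac1{2-\rho}-\tfrac1{2+\rho}\big)$.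 *)

From HB Require Import structures.
From mathcomp Require Import all_boot all_order all_algebra.
Set Implicit Arguments. Unset Strict Implicit. Unset Printing Implicit Defensive.
Import Order.TTheory GRing.Theory Num.Theory.
Local Open Scope ring_scope.

Section Defs.
Variable R : realFieldType.

Definition mx3 (rows : seq (seq R)) : 'M[R]_3 :=
  \matrix_(i < 3, j < 3) nth 0 (nth [::] rows i) j.

Definition agent1 : 'I_3 := @Ordinal 3 0 isT.
Definition agent2 : 'I_3 := @Ordinal 3 1 isT.
Definition agent3 : 'I_3 := @Ordinal 3 2 isT.

(* true beliefs; column i = mu_i *)
Definition Mtrue (m a : R) : 'M[R]_3 :=
  mx3 [:: [:: 0; a; a]; [:: m; 0; 0]; [:: m; 0; 0]].

Definition Mrep (mt ta bt : R) : 'M[R]_3 :=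
  mx3 [:: [:: 0; ta; bt]; [:: mt; 0; 0]; [:: mt; 0; 0]].

Definition Sigma (rho : R) : 'M[R]_3 :=
  mx3 [:: [:: 1; 0; 0]; [:: 0; 1; rho]; [:: 0; rho; 1]].

Definition Gamma : 'M[R]_3 := 1%:M.

Definition stable (rho : R) (Mp W P : 'M[R]_3) : Prop :=
  W^T = W /\ P^T = - P /\ Mp - P = 2%:R *: (Sigma rho *m W *m Gamma).

Definition utility (rho : R) (M : 'M[R]_3) (i : 'I_3) (W P : 'M[R]_3) : R :=
  let w := col i W in
  ((w^T *m (col i M - col i P)) 0 0) - ((w^T *m Sigma rho *m w) 0 0).

Definition util_at (rho : R) (M Mp : 'M[R]_3) (i : 'I_3) (v : R) : Prop :=
  exists W P, stable rho Mp W P /\ utility rho M i W P = v.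

Definition unique_argmax (U : R -> R -> Prop) (x : R) : Prop :=
  (exists v, U x v) /\
  forall y v v', U y v -> U x v' -> v <= v' /\ (y <> x -> v < v').

Definition nu (rho : R) : R := (((2 - rho)^-1) + ((2 + rho)^-1)) / 2.
Definition eta (rho : R) : R := (((2 - rho)^-1) - ((2 + rho)^-1)) / 2.
Definition alphat (rho mt : R) : R := mt / (2 + rho).
Definition c_coef (rho a mt : R) : R :=
  (a * nu rho - alphat rho mt * (1 - nu rho)) / (nu rho * (2 - nu rho)).
Definition s_coef (rho : R) : R :=
  (eta rho * (1 - nu rho)) / (nu rho * (2 - nu rho)).
End Defs.

From Pilot Require Import Defs.
From HB Require Import structures.
From mathcomp Require Import all_boot all_order all_algebra.
From mathcomp Require Import ring lra.
Import Order.TTheory GRing.Theory Num.Theory.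
Local Open Scope ring_scope.
Set Implicit Arguments. Unset Strict Implicit.

(* Since Sigma is positive definite, a matrix has at most one decomposition
   P + 2 Sigma W with P skew and W symmetric: for the difference D of two
   such W, Sigma D is skew, so tr (D^T Sigma D) = tr (D (Sigma D)) = 0 forces
   D = 0.  Hence the stable point is the explicit one, whose off-diagonal
   weights are affine in the reports.  Each fund's utility is then a concave
   quadratic in its own report, and completing the square (using
   nu = 2 / (4 - rho^2) and eta = rho / (4 - rho^2)) locates its maximum at
   c + s * (other report). *)

Section PosDef.
Variables (R : realFieldType) (n : nat).

Definition pos_def (A : 'M[R]_n) :=
  forall x : 'cV[R]_n, x != 0 -> 0 < (x^T *m A *m x) 0 0.

Lemma mxtrace_quad (A W : 'M[R]_n) :
  \tr (W^T *m A *m W) = \sum_j ((col j W)^T *m A *m col j W) 0 0.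
Proof.
apply: eq_bigr => j _; rewrite !mxE; apply: eq_bigr => k _; rewrite !mxE.
by congr (_ * _); apply: eq_bigr => l _; rewrite !mxE.
Qed.

Lemma pos_def_quad_eq0 (A W : 'M[R]_n) :
  pos_def A -> \tr (W^T *m A *m W) = 0 -> W = 0.
Proof.
move=> posA; rewrite mxtrace_quad => /psumr_eq0P quad0.
have quad_ge0 j : 0 <= ((col j W)^T *m A *m col j W) 0 0.
  by have [->|/posA/ltW //] := eqVneq (col j W) 0; rewrite mulmx0 mxE.
apply/matrixP => i j; have -> : W i j = col j W i 0 by rewrite mxE.
have [->|/posA] := eqVneq (col j W) 0; first by rewrite !mxE.
by rewrite (quad0 (fun k _ => quad_ge0 k)) ?ltxx.
Qed.

Lemma pos_defZ (c : R) (A : 'M[R]_n) : 0 < c -> pos_def A -> pos_def (c *: A).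
Proof.
by move=> c_gt0 posA x x_neq0; rewrite -scalemxAr -scalemxAl mxE mulr_gt0 ?posA.
Qed.

Lemma mxtrace_mul_sym_skew (W S : 'M[R]_n) :
  W^T = W -> S^T = - S -> \tr (W *m S) = 0.
Proof.
move=> symW skewS; have : \tr (W *m S) = - \tr (W *m S).
  by rewrite -[LHS]mxtrace_tr trmx_mul skewS symW mulNmx raddfN mxtrace_mulC.
by move: (\tr _) => t; lra.
Qed.

Lemma sym_skew_decomp_uniq (S W P W' P' : 'M[R]_n) : pos_def S ->
  W^T = W -> W'^T = W' -> P^T = - P -> P'^T = - P' ->
  P + S *m W = P' + S *m W' -> W = W' /\ P = P'.
Proof.
move=> posS symW symW' skewP skewP' eqM.
have eqSD : S *m (W - W') = P' - P.
  rewrite mulmxBr; have -> : S *m W = P' + S *m W' - P.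
    by rewrite -eqM addrAC subrr add0r.
  by rewrite addrAC addrK.
have symD : (W - W')^T = W - W' by rewrite linearB /= symW symW'.
have skewSD : (S *m (W - W'))^T = - (S *m (W - W')).
  by rewrite eqSD linearB /= skewP skewP' opprD.
have /eqP : W - W' = 0.
  by apply: (pos_def_quad_eq0 posS); rewrite symD -mulmxA mxtrace_mul_sym_skew.
rewrite subr_eq0 => /eqP eqW; split => //.
by move: eqM; rewrite eqW => /addIr.
Qed.
End PosDef.

Section UniqueArgmax.
Variable R : realFieldType.

Lemma unique_argmax_concave_quadratic (U : R -> R -> Prop) (f : R -> R) (x k : R) :
  0 < k -> (forall y v, U y v <-> v = f y) ->
  (forall y, f y = f x - k * (y - x) ^+ 2) -> unique_argmax U x.
Proof.
move=> k_gt0 Uf f_sq; split; first by exists (f x); apply/Uf.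
move=> y v v' /Uf -> /Uf ->; rewrite [f y]f_sq; split.
  by rewrite gerBl mulr_ge0 ?sqr_ge0 // ltW.
move=> /eqP y_neq_x; rewrite gtrBl mulr_gt0 //.
by rewrite exprn_even_gt0 //= subr_eq0.
Qed.
End UniqueArgmax.

Lemma sqr_sum_gt0 (R : realFieldType) (r a b c : R) :
  r ^+ 2 < 1 -> [|| a != 0, b != 0 | c != 0] ->
  0 < a ^+ 2 + (b + r * c) ^+ 2 + (1 - r ^+ 2) * c ^+ 2.
Proof.
move=> r2_lt1; have sq_gt0 (y : R) : y != 0 -> 0 < y ^+ 2 by rewrite exprn_even_gt0.
case/or3P => /sq_gt0 sq_y_gt0.
- by have := sqr_ge0 (b + r * c); have := sqr_ge0 c; nra.
- have [->|/sq_gt0 ?] := eqVneq c 0; first by rewrite mulr0 addr0; nra.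
  by have := sqr_ge0 a; have := sqr_ge0 (b + r * c); nra.
- by have := sqr_ge0 a; have := sqr_ge0 (b + r * c); nra.
Qed.

Lemma big_ord3 (V : nmodType) (F : 'I_3 -> V) :
  \sum_i F i = F agent1 + F agent2 + F agent3.
Proof.
rewrite !big_ord_recl big_ord0 addr0 addrA.
by congr (_ + _ + _); congr F; apply: val_inj.
Qed.

Lemma ord3_ind (P : 'I_3 -> Prop) :
  P agent1 -> P agent2 -> P agent3 -> forall i, P i.
Proof.
move=> P1 P2 P3 [[|[|[|i]]] lti] //.
- by rewrite (_ : Ordinal lti = agent1) //; apply: val_inj.
- by rewrite (_ : Ordinal lti = agent2) //; apply: val_inj.
- by rewrite (_ : Ordinal lti = agent3) //; apply: val_inj.
Qed.

Section Market.
Variables (R : realFieldType) (rho : R).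
Hypotheses (rho_gtN1 : -1 < rho) (rho_lt1 : rho < 1).

Lemma sqr_rho_lt1 : rho ^+ 2 < 1.
Proof.
(* lra does not look at section hypotheses *)
move: rho_gtN1 rho_lt1 => ? ?.
by rewrite -subr_gt0 (_ : 1 - _ = (1 - rho) * (1 + rho)); [apply: mulr_gt0; lra | ring].
Qed.

Lemma pos_def_Sigma : pos_def (Sigma rho).
Proof.
move=> x x_neq0.
have -> : (x^T *m Sigma rho *m x) 0 0 =
    x agent1 0 ^+ 2 + (x agent2 0 + rho * x agent3 0) ^+ 2
    + (1 - rho ^+ 2) * x agent3 0 ^+ 2.
  by rewrite !mxE big_ord3 !mxE !big_ord3 !mxE /=; ring.
apply: sqr_sum_gt0 sqr_rho_lt1 _; apply: contraNT x_neq0.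
rewrite !negb_or !negbK => /and3P[/eqP x1 /eqP x2 /eqP x3].
by apply/eqP/matrixP; apply: ord3_ind => j; rewrite (ord1 j) mxE.
Qed.

(* The stable weight W_1i of a fund reporting x while the other fund reports y. *)
Definition fund_weight (mt x y : R) : R :=
  (2 * (x + mt) - rho * (y + mt)) / (2 * (4 - rho ^+ 2)).

Definition stable_W (mt ta bt : R) : 'M[R]_3 :=
  mx3 [:: [:: 0; fund_weight mt ta bt; fund_weight mt bt ta];
          [:: fund_weight mt ta bt; 0; 0]; [:: fund_weight mt bt ta; 0; 0]].

Definition stable_P (mt ta bt : R) : 'M[R]_3 :=
  mx3 [:: [:: 0; ta - 2 * fund_weight mt ta bt; bt - 2 * fund_weight mt bt ta];
          [:: 2 * fund_weight mt ta bt - ta; 0; 0];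
          [:: 2 * fund_weight mt bt ta - bt; 0; 0]].

Lemma four_sub_sqr_rho_neq0 : 4 - rho ^+ 2 != 0.
Proof. by have := sqr_rho_lt1 => ?; rewrite gt_eqF //; lra. Qed.

Lemma stable_Mrep (mt ta bt : R) :
  stable rho (Mrep mt ta bt) (stable_W mt ta bt) (stable_P mt ta bt).
Proof.
have := four_sub_sqr_rho_neq0.
rewrite /stable /Gamma mulmx1; split; [|split]; apply/matrixP;
  apply: ord3_ind => /=; apply: ord3_ind => /=;
  rewrite /Mrep /stable_W /stable_P /Sigma /mx3 !mxE ?big_ord3 ?mxE /=;
  by rewrite /fund_weight; field.
Qed.

Lemma stable_uniq (Mp W P W' P' : 'M[R]_3) :
  stable rho Mp W P -> stable rho Mp W' P' -> W = W' /\ P = P'.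
Proof.
have decomp V Q : stable rho Mp V Q -> Q + (2%:R *: Sigma rho) *m V = Mp.
  by case=> _ [_]; rewrite /Gamma mulmx1 -scalemxAl => <-; rewrite addrC subrK.
move=> stWP stWP'; case: (stWP) (stWP') => symW [skewP _] [symW' [skewP' _]].
have pos2Sigma : pos_def (2%:R *: Sigma rho) by apply: pos_defZ pos_def_Sigma.
apply: (sym_skew_decomp_uniq pos2Sigma) => //.
by rewrite (decomp _ _ stWP) (decomp _ _ stWP').
Qed.

Lemma util_at_Mrep (M : 'M[R]_3) (i : 'I_3) (mt ta bt v : R) :
  util_at rho M (Mrep mt ta bt) i v <->
  v = utility rho M i (stable_W mt ta bt) (stable_P mt ta bt).
Proof.
split=> [[W [P [stWP <-]]] | ->].
  by case: (stable_uniq stWP (stable_Mrep mt ta bt)) => -> ->.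
by do 2!eexists; split; first exact: stable_Mrep.
Qed.

Definition fund_payoff (a mt y x : R) : R :=
  fund_weight mt x y * (a - x) + fund_weight mt x y ^+ 2.

Lemma util_at_fund2 (m a mt ta bt v : R) :
  util_at rho (Mtrue m a) (Mrep mt ta bt) agent2 v <-> v = fund_payoff a mt bt ta.
Proof.
suff -> : fund_payoff a mt bt ta =
  utility rho (Mtrue m a) agent2 (stable_W mt ta bt) (stable_P mt ta bt).
  exact: util_at_Mrep.
rewrite /fund_payoff /utility /Mtrue /stable_W /stable_P /Sigma /mx3.
by rewrite !(mxE, big_ord3) /=; ring.
Qed.

Lemma util_at_fund3 (m a mt ta bt v : R) :
  util_at rho (Mtrue m a) (Mrep mt ta bt) agent3 v <-> v = fund_payoff a mt ta bt.
Proof.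
suff -> : fund_payoff a mt ta bt =
  utility rho (Mtrue m a) agent3 (stable_W mt ta bt) (stable_P mt ta bt).
  exact: util_at_Mrep.
rewrite /fund_payoff /utility /Mtrue /stable_W /stable_P /Sigma /mx3.
by rewrite !(mxE, big_ord3) /=; ring.
Qed.

Lemma fund_payoff_sqr (a mt y x : R) :
  let x0 := c_coef rho a mt + s_coef rho * y in
  fund_payoff a mt y x =
  fund_payoff a mt y x0 - (3 - rho ^+ 2) / (4 - rho ^+ 2) ^+ 2 * (x - x0) ^+ 2.
Proof.
have := sqr_rho_lt1 => rho2_lt1.
have factor4 : (2 - rho) * (2 + rho) = 4 - rho ^+ 2 by ring.
have := four_sub_sqr_rho_neq0.
rewrite -factor4 mulf_eq0 negb_or => /andP[neq2 neq2'].
rewrite /c_coef /s_coef /nu /Defs.eta /alphat /fund_payoff /fund_weight.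
field; rewrite neq2 neq2' four_sub_sqr_rho_neq0 /=.
by apply/andP; split; rewrite gt_eqF //; lra.
Qed.

Lemma fund_payoff_curvature_gt0 : 0 < (3 - rho ^+ 2) / (4 - rho ^+ 2) ^+ 2.
Proof.
have := sqr_rho_lt1 => rho2_lt1.
by rewrite divr_gt0 ?exprn_even_gt0 ?four_sub_sqr_rho_neq0 //; lra.
Qed.
End Market.

Theorem mainTheorem12 (R : realFieldType) (m a rho mt : R)
  (hrho1 : -1 < rho) (hrho2 : rho < 1) :
  (forall bt : R,
     unique_argmax
       (fun ta v => util_at rho (Mtrue m a) (Mrep mt ta bt) agent2 v)
       (c_coef rho a mt + s_coef rho * bt)) /\
  (forall ta : R,
     unique_argmax
       (fun bt v => util_at rho (Mtrue m a) (Mrep mt ta bt) agent3 v)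
       (c_coef rho a mt + s_coef rho * ta)).
Proof.
have curv_gt0 := fund_payoff_curvature_gt0 hrho1 hrho2.
split=> y; apply: (unique_argmax_concave_quadratic (f := fund_payoff rho a mt y)) curv_gt0 _ _.
- by move=> x v; apply: util_at_fund2.
- exact: fund_payoff_sqr.
- by move=> x v; apply: util_at_fund3.
- exact: fund_payoff_sqr.
Qed.
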